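(* If the weight state tends to a time state, $\hat \rho_W \to |t\rangle\langle t|_W$, then $\hat \sigma_S \to e^{-i\hat H_S t} \hat \rho_S e^{i\hat H_S t}$ and the locked energy $\Delta_L \to 0$. If instead the weight tends to an energy eigenstate, $\hat \rho_W \to |\varepsilon\rangle\langle \varepsilon|_W$, then $\hat \sigma_S \to D[\hat \rho_S]$ (dephasing in the energy basis of $\hat H_S$) and $\Delta_L$ is maximal.
   Context: System $S$ (Hamiltonian $\hat H_S$), heat bath in Gibbs state $\hat\tau_B$ (Hamiltonian $\hat H_B$), weight $W$ with continuous energy eigenstates $|\varepsilon\rangle_W$ and time states $|t\rangle_W = \int d\varepsilon\, e^{i\varepsilon t}|\varepsilon\rangle_W$. The control-marginal state is $\hat \sigma_S = \int dt\, p(t)\, e^{-i\hat H_S t}\hat\rho_S e^{i\hat H_S t}$ with $p(t)=\mathrm{Tr}[\hat\rho_W |t\rangle\langle t|_W]$. Ergotropy: $R(\hat\rho)=\max_{\hat U}\mathrm{Tr}[(\hat H-\hat U^\dagger\hat H\hat U)\hat\rho]$ with $\hat H=\hat H_S+\hat H_B$. Locked energy: $\Delta_L(\hat\rho_S,\hat\rho_W,\hat\tau_B) = R(\hat\rho_S\otimes\hat\tau_B) - R(\hat\sigma_S\otimes\hat\tau_B)\ge 0$; the optimal work extractable into the weight by energy-conserving, translationally invariant unitaries is $R(\hat\sigma_S\otimes\hat\tau_B)$. *)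

From mathcomp Require Import all_boot all_order all_algebra.
From mathcomp Require Import all_classical all_reals all_analysis.
From mathcomp.real_closed Require Import complex mxtens.

Set Implicit Arguments.
Unset Strict Implicit.
Unset Printing Implicit Defensive.

Import Order.TTheory GRing.Theory Num.Theory.
Import numFieldNormedType.Exports.
Local Open Scope ring_scope.
Local Open Scope classical_set_scope.

Section QDefs.
Variable R : realType.
Local Notation C := R[i].

Definition dagger {p q : nat} (A : 'M[C]_(p, q)) : 'M[C]_(q, p) :=
  (map_mx (fun z : C => z^*%C) A)^T.

Definition qunitary {p : nat} (U : 'M[C]_p) : Prop := dagger U *m U = 1%:M.

Definition psd {p : nat} (A : 'M[C]_p) : Prop :=
  forall v : 'cV[C]_p, 0 <= (dagger v *m A *m v) 0 0.
Definition density {p : nat} (A : 'M[C]_p) : Prop := psd A /\ \tr A = 1.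

Definition expiR (x : R) : C := (cos x +i* sin x)%C.

Definition specH {p : nat} (U : 'M[C]_p) (E : 'I_p -> R) : 'M[C]_p :=
  U *m diag_mx (\row_a (E a)%:C%C) *m dagger U.

Definition evol {p : nat} (U : 'M[C]_p) (E : 'I_p -> R) (t : R) : 'M[C]_p :=
  U *m diag_mx (\row_a expiR (- (E a * t))) *m dagger U.

Definition rotH {p : nat} (U : 'M[C]_p) (E : 'I_p -> R) (t : R)
  (rho : 'M[C]_p) : 'M[C]_p :=
  evol U E t *m rho *m dagger (evol U E t).

(* dephasing D[rho] in the energy eigenbasis of H = specH U E:
   sum over eigenvalues lambda of P_lambda rho P_lambda *)
Definition dephase {p : nat} (U : 'M[C]_p) (E : 'I_p -> R) (rho : 'M[C]_p)
  : 'M[C]_p :=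
  U *m (\matrix_(a, b) (if E a == E b then (dagger U *m rho *m U) a b else 0))
    *m dagger U.

Definition gibbs {q : nat} (V : 'M[C]_q) (F : 'I_q -> R) (beta : R)
  : 'M[C]_q :=
  V *m diag_mx (\row_b (expR (- (beta * F b)) /
                        (\sum_(c < q) expR (- (beta * F c))))%:C%C)
    *m dagger V.

Definition totalH {p q : nat} (HS : 'M[C]_p) (HB : 'M[C]_q) : 'M[C]_(p * q) :=
  HS *t (1%:M : 'M[C]_q) + (1%:M : 'M[C]_p) *t HB.

Definition ergotropy {N : nat} (H X : 'M[C]_N) : R :=
  sup [set x : R | exists W : 'M[C]_N,
        qunitary W /\ x = complex.Re (\tr ((H - dagger W *m H *m W) *m X))].

(* control-marginal state sigma_S = \int dt p(t) e^{-iH_S t} rho_S e^{iH_S t},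
   with p the time distribution of the weight, a probability measure on R *)
Definition sigmaS {p : nat} (U : 'M[C]_p) (E : 'I_p -> R) (rho : 'M[C]_p)
  (P : probability R R) : 'M[C]_p :=
  \matrix_(j, k)
    ((\int[P]_t complex.Re (rotH U E t rho j k))
      +i* (\int[P]_t complex.Im (rotH U E t rho j k)))%C.

Definition lockedE {p q : nat} (HS : 'M[C]_p) (U : 'M[C]_p) (E : 'I_p -> R)
  (HB : 'M[C]_q) (tau : 'M[C]_q) (rho : 'M[C]_p) (P : probability R R) : R :=
  ergotropy (totalH HS HB) (rho *t tau)
  - ergotropy (totalH HS HB) (sigmaS U E rho P *t tau).

Definition mx_cvg {p q : nat} (A : nat -> 'M[C]_(p, q)) (B : 'M[C]_(p, q))
  : Prop :=
  forall i j,
    (complex.Re (A k i j) @[k --> \oo] --> complex.Re (B i j)) /\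
    (complex.Im (A k i j) @[k --> \oo] --> complex.Im (B i j)).

(* the weight tends to the time state |t0><t0| : its time distribution
   converges weakly (in distribution) to the Dirac mass at t0 *)
Definition tends_to_time_state (P : nat -> probability R R) (t0 : R) : Prop :=
  forall f : R -> R, continuous f -> (exists M : R, forall x, `|f x| <= M) ->
    (\int[P k]_t f t) @[k --> \oo] --> f t0.

(* the weight tends to an energy eigenstate |eps><eps| : all energy
   coherences <eps+w|rho_W|eps> (w <> 0) vanish, i.e. the characteristic
   function of the time distribution vanishes at every nonzero frequency *)
Definition tends_to_energy_state (P : nat -> probability R R) : Prop :=
  forall w : R, w != 0 ->
    ((\int[P k]_t cos (w * t)) @[k --> \oo] --> 0) /\
    ((\int[P k]_t sin (w * t)) @[k --> \oo] --> 0).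

End QDefs.

(* In an eigenbasis of H_S the control-marginal state is a Schur product:
   (sigma_S)_ab = (rho_S)_ab phi(E_b - E_a), where phi is the characteristic
   function of the time distribution p of the weight.  If p tends weakly to the
   Dirac mass at t0, then phi(w) tends to e^{i w t0} and sigma_S tends to
   e^{-i H_S t0} rho_S e^{i H_S t0}; if phi vanishes in the limit at every
   nonzero frequency, only the blocks E_a = E_b survive and sigma_S tends to
   D[rho_S].
   Ergotropy is Lipschitz in the entries of the state (unitaries have bounded
   entries), so the locked energy converges along with sigma_S.  It is invariant
   under conjugation by unitaries S (x) 1 with S commuting with H_S, so time
   evolution does not change it and the first limit is 0.  It is also midpoint
   convex, so a pinching X |-> (X + S X S^dagger)/2 never increases it.
   Pinching sigma_S successively with the reflections 1 - 2 P_lambda in the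
   eigenspaces of H_S gives D[sigma_S] = D[rho_S] (since phi(0) = 1), hence
   R(D[rho_S] (x) tau) <= R(sigma_S (x) tau) for every weight state. *)

From mathcomp Require Import all_boot all_order all_algebra.
From mathcomp Require Import all_classical all_reals all_analysis.
From mathcomp Require Import measurable_realfun ring lra.
From mathcomp.real_closed Require Import complex mxtens.

Set Implicit Arguments.
Unset Strict Implicit.
Unset Printing Implicit Defensive.

Import Order.TTheory GRing.Theory Num.Theory.
Import numFieldNormedType.Exports.
Local Open Scope ring_scope.
Local Open Scope classical_set_scope.

Local Notation Re := complex.Re.
Local Notation Im := complex.Im.

Section ComplexParts.
Variable R : realType.
Local Notation C := R[i].
Implicit Types (x y : C) (a : R).

(* [Re] and [Im] are additive maps on [Rcomplex R], whose carrier is [R[i]]. *)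

Lemma ReD x y : Re (x + y) = Re x + Re y.
Proof. by rewrite (raddfD (@complex.Re R : Rcomplex R -> R)). Qed.

Lemma ImD x y : Im (x + y) = Im x + Im y.
Proof. by rewrite (raddfD (@complex.Im R : Rcomplex R -> R)). Qed.

Lemma ReB x y : Re (x - y) = Re x - Re y.
Proof. by rewrite (raddfB (@complex.Re R : Rcomplex R -> R)). Qed.

Lemma ImB x y : Im (x - y) = Im x - Im y.
Proof. by rewrite (raddfB (@complex.Im R : Rcomplex R -> R)). Qed.

Lemma Re_sum (I : Type) (r : seq I) (F : I -> C) :
  Re (\sum_(i <- r) F i) = \sum_(i <- r) Re (F i).
Proof. by rewrite (raddf_sum (@complex.Re R : Rcomplex R -> R)). Qed.

Lemma Im_sum (I : Type) (r : seq I) (F : I -> C) :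
  Im (\sum_(i <- r) F i) = \sum_(i <- r) Im (F i).
Proof. by rewrite (raddf_sum (@complex.Im R : Rcomplex R -> R)). Qed.

Lemma Re_mul x y : Re (x * y) = Re x * Re y - Im x * Im y.
Proof. by case: x; case: y. Qed.

Lemma Im_mul x y : Im (x * y) = Re x * Im y + Im x * Re y.
Proof. by case: x; case: y. Qed.

Lemma Re_realM a x : Re (a%:C%C * x) = a * Re x.
Proof. by rewrite Re_mul /= mul0r subr0. Qed.

Lemma Re_mul_expiR x a : Re (x * expiR a) = Re x * cos a + (- Im x) * sin a.
Proof. by rewrite Re_mul mulNr. Qed.

Lemma Im_mul_expiR x a : Im (x * expiR a) = Im x * cos a + Re x * sin a.
Proof. by rewrite Im_mul addrC. Qed.

Lemma expiRD a b : expiR a * expiR b = expiR (a + b).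
Proof.
rewrite /expiR cosD sinD; apply/eqP; rewrite eq_complex /=.
by apply/andP; split; apply/eqP; ring.
Qed.

Lemma conj_expiR a : (expiR a)^*%C = expiR (- a).
Proof. by rewrite /expiR cosN sinN. Qed.

Lemma expiR0 : expiR 0 = 1 :> C.
Proof. by rewrite /expiR cos0 sin0. Qed.

Lemma conj_expiR_mul a : (expiR a)^*%C * expiR a = 1.
Proof. by rewrite conj_expiR expiRD addNr expiR0. Qed.

End ComplexParts.

Section Dagger.
Variable R : realType.
Local Notation C := R[i].

Lemma daggerM p q r (A : 'M[C]_(p, q)) (B : 'M[C]_(q, r)) :
  dagger (A *m B) = dagger B *m dagger A.
Proof. by rewrite /dagger map_mxM trmx_mul. Qed.

Lemma daggerK p q (A : 'M[C]_(p, q)) : dagger (dagger A) = A.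
Proof. by apply/matrixP => i j; rewrite !mxE conjcK. Qed.

Lemma dagger1 p : dagger (1%:M : 'M[C]_p) = 1%:M.
Proof. by apply/matrixP => i j; rewrite !mxE eq_sym conjc_nat. Qed.

Lemma dagger_diag p (d : 'I_p -> C) :
  dagger (diag_mx (\row_a d a)) = diag_mx (\row_a (d a)^*%C).
Proof.
apply/matrixP => i j; rewrite !mxE rmorphMn eq_sym.
by case: eqP => [->|].
Qed.

Lemma dagger_tens p q r s (A : 'M[C]_(p, q)) (B : 'M[C]_(r, s)) :
  dagger (A *t B) = dagger A *t dagger B.
Proof. by rewrite /dagger map_mxT trmx_tens. Qed.

Lemma tensmx11 p q : (1%:M : 'M[C]_p) *t (1%:M : 'M[C]_q) = 1%:M.
Proof.
apply/matrixP => i j.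
case: (mxtens_indexP i) => i1 i2; case: (mxtens_indexP j) => j1 j2.
rewrite tensmxE !mxE (can_eq (@mxtens_indexK _ _)) xpair_eqE.
by case: (i1 == j1); case: (i2 == j2); rewrite ?mulr1 ?mulr0.
Qed.

Lemma tensmxDl p q r s (A B : 'M[C]_(p, q)) (T : 'M[C]_(r, s)) :
  (A + B) *t T = A *t T + B *t T.
Proof. by apply/matrixP => i j; rewrite !mxE mulrDl. Qed.

Lemma tensmxZl p q r s (a : C) (A : 'M[C]_(p, q)) (T : 'M[C]_(r, s)) :
  (a *: A) *t T = a *: (A *t T).
Proof. by apply/matrixP => i j; rewrite !mxE mulrA. Qed.

Lemma qunitary_mulmxV p (W : 'M[C]_p) : qunitary W -> W *m dagger W = 1%:M.
Proof. exact: mulmx1C. Qed.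

Lemma qunitary_dagger p (W : 'M[C]_p) : qunitary W -> qunitary (dagger W).
Proof. by move=> hW; rewrite /qunitary daggerK qunitary_mulmxV. Qed.

Lemma qunitaryM p (W V : 'M[C]_p) : qunitary W -> qunitary V -> qunitary (W *m V).
Proof.
move=> hW hV.
by rewrite /qunitary daggerM -mulmxA (mulmxA (dagger W)) hW mul1mx.
Qed.

End Dagger.

Section Cabs1.
Variable R : realType.
Local Notation C := R[i].
Implicit Types x y : C.

Definition cabs1 x : R := `|Re x| + `|Im x|.

Lemma cabs1_ge0 x : 0 <= cabs1 x.
Proof. by rewrite addr_ge0. Qed.

Lemma cabs1N x : cabs1 (- x) = cabs1 x.
Proof. by rewrite /cabs1 -[- x]sub0r ReB ImB !sub0r !normrN. Qed.

Lemma cabs1D x y : cabs1 (x + y) <= cabs1 x + cabs1 y.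
Proof.
rewrite /cabs1 ReD ImD addrACA.
by apply: lerD; exact: ler_normD.
Qed.

Lemma cabs1M x y : cabs1 (x * y) <= cabs1 x * cabs1 y.
Proof.
rewrite /cabs1 Re_mul Im_mul mulrDl !mulrDr -!normrM.
have := ler_normB (Re x * Re y) (Im x * Im y).
have := ler_normD (Re x * Im y) (Im x * Re y).
lra.
Qed.

Lemma cabs1_sum (I : Type) (r : seq I) (F : I -> C) :
  cabs1 (\sum_(i <- r) F i) <= \sum_(i <- r) cabs1 (F i).
Proof.
elim/big_rec2: _ => [|i y1 y2 _ h]; first by rewrite /cabs1 normr0 addr0.
exact: le_trans (cabs1D _ _) (lerD (lexx _) h).
Qed.

Lemma Re_le_cabs1 x : `|Re x| <= cabs1 x.
Proof. by rewrite lerDl. Qed.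

Definition mxabs1 p q (A : 'M[C]_(p, q)) : R := \sum_i \sum_j cabs1 (A i j).

Lemma cabs1_le_mxabs1 p q (A : 'M[C]_(p, q)) i j : cabs1 (A i j) <= mxabs1 A.
Proof.
have le_sum (I : finType) (F : I -> R) k : (forall l, 0 <= F l) -> F k <= \sum_l F l.
  by move=> F0; rewrite (bigD1 k) //= lerDl sumr_ge0.
apply: le_trans (le_sum _ _ j _) (le_sum _ _ i _) => [l|l]; first exact: cabs1_ge0.
by apply: sumr_ge0 => ? _; exact: cabs1_ge0.
Qed.

Lemma mxabs1_subC p q (A B : 'M[C]_(p, q)) : mxabs1 (A - B) = mxabs1 (B - A).
Proof.
by rewrite -opprB /mxabs1; under eq_bigr do under eq_bigr do rewrite mxE cabs1N.
Qed.

Lemma cabs1_unitary p (W : 'M[C]_p) i j : qunitary W -> cabs1 (W i j) <= 2.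
Proof.
move=> hW.
have col_norm : \sum_k (Re (W k j) ^+ 2 + Im (W k j) ^+ 2) = 1.
  have := congr1 (fun M : 'M[C]_p => Re (M j j)) hW; rewrite /= !mxE eqxx Re_sum /= => <-.
  by apply: eq_bigr => k _; rewrite !mxE; case: (W k j) => a b /=; ring.
have entry_le1 : Re (W i j) ^+ 2 + Im (W i j) ^+ 2 <= 1.
  rewrite -col_norm (bigD1 i) //= lerDl.
  by apply: sumr_ge0 => k _; rewrite addr_ge0 ?sqr_ge0.
have sqr_le1 (a : R) : a ^+ 2 <= 1 -> `|a| <= 1.
  by move=> a2; rewrite ler_norml; apply/andP; split; rewrite expr2 in a2; nra.
rewrite /cabs1 -[2%R]/(1 + 1); apply: lerD; apply: sqr_le1.
- by have := sqr_ge0 (Im (W i j)); lra.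
- by have := sqr_ge0 (Re (W i j)); lra.
Qed.

End Cabs1.

Section ComplexConvergence.
Variable R : realType.
Local Notation C := R[i].

Definition ccvg (u : nat -> C) (l : C) : Prop :=
  (Re (u k) @[k --> \oo] --> Re l) /\ (Im (u k) @[k --> \oo] --> Im l).

Lemma cvg_sumr (I : Type) (r : seq I) (u : I -> nat -> R) (l : I -> R) :
  (forall i, u i k @[k --> \oo] --> l i) ->
  \sum_(i <- r) u i k @[k --> \oo] --> \sum_(i <- r) l i.
Proof. by move=> ul; apply: cvg_big => //; exact: add_continuous. Qed.

Lemma ccvg_cst (c : C) : ccvg (fun=> c) c.
Proof. by split; exact: cvg_cst. Qed.

Lemma ccvgZ (a : C) u l : ccvg u l -> ccvg (fun k => a * u k) (a * l).
Proof.
move=> [ul1 ul2]; split.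
- rewrite Re_mul; under eq_cvg do rewrite Re_mul.
  by apply: cvgB; apply: cvgM => //; exact: cvg_cst.
- rewrite Im_mul; under eq_cvg do rewrite Im_mul.
  by apply: cvgD; apply: cvgM => //; exact: cvg_cst.
Qed.

Lemma ccvg_sum (I : Type) (r : seq I) (u : I -> nat -> C) (l : I -> C) :
  (forall i, ccvg (u i) (l i)) ->
  ccvg (fun k => \sum_(i <- r) u i k) (\sum_(i <- r) l i).
Proof.
move=> ul; split.
- rewrite Re_sum; under eq_cvg do rewrite Re_sum.
  by apply: cvg_sumr => i; case: (ul i).
- rewrite Im_sum; under eq_cvg do rewrite Im_sum.
  by apply: cvg_sumr => i; case: (ul i).
Qed.

Lemma ccvg_cabs1 u l : ccvg u l -> cabs1 (u k - l) @[k --> \oo] --> 0.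
Proof.
move=> [re im].
have re0 : `|Re (u k) - Re l| @[k --> \oo] --> 0 by exact/norm_cvg0P/subr_cvg0.
have im0 : `|Im (u k) - Im l| @[k --> \oo] --> 0 by exact/norm_cvg0P/subr_cvg0.
have -> : (fun k => cabs1 (u k - l)) =
          (fun k => `|Re (u k) - Re l| + `|Im (u k) - Im l|).
  by apply/funext => k; rewrite /cabs1 ReB ImB.
by rewrite -(addr0 0); exact: cvgD re0 im0.
Qed.

End ComplexConvergence.

Section Ergotropy.
Variables (R : realType) (N : nat) (H : 'M[R[i]]_N).
Local Notation C := R[i].
Implicit Types W X Y : 'M[C]_N.

Definition work W X : R := Re (\tr ((H - dagger W *m H *m W) *m X)).

Lemma workB W X Y : work W (X - Y) = work W X - work W Y.
Proof. by rewrite /work mulmxBr linearB ReB. Qed.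

Lemma work_mid W X Y :
  work W ((2^-1)%:C%C *: (X + Y)) = (work W X + work W Y) / 2.
Proof. by rewrite /work -scalemxAr mxtraceZ Re_realM mulmxDr mxtraceD ReD mulrC. Qed.

Lemma cabs1_conj_unitary W i j : qunitary W ->
  cabs1 ((dagger W *m H *m W) i j) <= 4 * mxabs1 H.
Proof.
move=> hW; rewrite mxE; apply: le_trans (cabs1_sum _ _) _.
rewrite /mxabs1 exchange_big mulr_sumr; apply: ler_sum => l _.
have row_bound : cabs1 ((dagger W *m H) i l) <= 2 * \sum_k cabs1 (H k l).
  rewrite mxE mulr_sumr; apply: le_trans (cabs1_sum _ _) (ler_sum _ _) => k _.
  apply: le_trans (cabs1M _ _) (ler_wpM2r (cabs1_ge0 _) _).
  exact: cabs1_unitary (qunitary_dagger hW).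
apply: le_trans (cabs1M _ _) _.
have := ler_pM (cabs1_ge0 _) (cabs1_ge0 _) row_bound (cabs1_unitary l j hW).
lra.
Qed.

Lemma work_bound W X : qunitary W -> `|work W X| <= 5 * mxabs1 H * mxabs1 X.
Proof.
move=> hW; apply: le_trans (Re_le_cabs1 _) _.
rewrite /mxtrace; apply: le_trans (cabs1_sum _ _) _.
rewrite [mxabs1 X]/mxabs1 exchange_big mulr_sumr; apply: ler_sum => i _.
rewrite mxE mulr_sumr; apply: le_trans (cabs1_sum _ _) (ler_sum _ _) => j _.
apply: le_trans (cabs1M _ _) _; rewrite ler_wpM2r ?cabs1_ge0 //.
rewrite [(H - _) i j]mxE; apply: le_trans (cabs1D _ _) _.
rewrite mxE cabs1N; have := cabs1_le_mxabs1 H i j; have := cabs1_conj_unitary i j hW.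
lra.
Qed.

Lemma work_le_ergotropy W X : qunitary W -> work W X <= ergotropy H X.
Proof.
move=> hW; apply: ub_le_sup; last by exists W.
exists (5 * mxabs1 H * mxabs1 X) => _ [V [hV ->]].
exact: le_trans (ler_norm _) (work_bound _ hV).
Qed.

Lemma ergotropy_le X c :
  (forall W, qunitary W -> work W X <= c) -> ergotropy H X <= c.
Proof.
move=> hc; apply: ge_sup; last by move=> _ [W [hW ->]]; exact: hc.
exists (work 1%:M X), 1%:M; split => //.
by rewrite /qunitary dagger1 mul1mx.
Qed.

Lemma ergotropy_lipschitz X Y :
  `|ergotropy H X - ergotropy H Y| <= 5 * mxabs1 H * mxabs1 (X - Y).
Proof.
have one_side X' Y' :
    ergotropy H X' <= ergotropy H Y' + 5 * mxabs1 H * mxabs1 (X' - Y').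
  apply: ergotropy_le => W hW.
  rewrite -[work W X'](subrK (work W Y')) -workB addrC.
  apply: lerD; first exact: work_le_ergotropy.
  exact: le_trans (ler_norm _) (work_bound _ hW).
have := one_side X Y; have := one_side Y X; rewrite mxabs1_subC ler_norml => ? ?.
by apply/andP; split; lra.
Qed.

Lemma ergotropy_mid X Y :
  ergotropy H ((2^-1)%:C%C *: (X + Y)) <= (ergotropy H X + ergotropy H Y) / 2.
Proof.
apply: ergotropy_le => W hW; rewrite work_mid ler_pM2r ?invr_gt0 //.
by apply: lerD; exact: work_le_ergotropy.
Qed.

Lemma ergotropy_conj V X : qunitary V -> dagger V *m H *m V = H ->
  ergotropy H (V *m X *m dagger V) = ergotropy H X.
Proof.
move=> hV VH.
have work_conj W : work W (V *m X *m dagger V) = work (W *m V) X.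
  rewrite /work !mulmxA mxtrace_mulC !mulmxA mulmxBr mulmxBl VH.
  by rewrite !daggerM !mulmxA.
congr sup; apply/seteqP; split => _ [W [hW ->]].
- by exists (W *m V); split; [exact: qunitaryM | exact: work_conj].
- exists (W *m dagger V); split; first exact/qunitaryM/qunitary_dagger.
  have := work_conj (W *m dagger V).
  by rewrite -[W *m dagger V *m V]mulmxA [dagger V *m V]hV mulmx1 => /esym.
Qed.

Lemma ergotropy_cvg (Xk : nat -> 'M[C]_N) X :
  mx_cvg Xk X -> ergotropy H (Xk k) @[k --> \oo] --> ergotropy H X.
Proof.
move=> XkX.
have dist0 : mxabs1 (Xk k - X) @[k --> \oo] --> 0.
  suff : mxabs1 (Xk k - X) @[k --> \oo] --> \sum_(i < N) \sum_(j < N) (0 : R).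
    by rewrite !big1_eq.
  apply: cvg_sumr => i; apply: cvg_sumr => j.
  under eq_cvg do rewrite !mxE.
  exact: ccvg_cabs1 (XkX i j).
have Kdist0 : 5 * mxabs1 H * mxabs1 (Xk k - X) @[k --> \oo] --> 0.
  by rewrite -(mulr0 (5 * mxabs1 H)); apply: cvgM => //; exact: cvg_cst.
apply: (@squeeze_cvgr _ _ _ _
  (fun k => ergotropy H X - 5 * mxabs1 H * mxabs1 (Xk k - X))
  (fun k => ergotropy H X + 5 * mxabs1 H * mxabs1 (Xk k - X))).
- by apply: nearW => k; rewrite -ler_distl; exact: ergotropy_lipschitz.
- by rewrite -{2}(subr0 (ergotropy H X)); exact: cvgB (cvg_cst _) Kdist0.
- by rewrite -{2}(addr0 (ergotropy H X)); exact: cvgD (cvg_cst _) Kdist0.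
Qed.

End Ergotropy.

Section LocalUnitary.
Variables (R : realType) (n m : nat) (HS S : 'M[R[i]]_n) (HB T : 'M[R[i]]_m).
Hypotheses (S_unitary : qunitary S) (S_HS : dagger S *m HS *m S = HS).
Local Notation H := (totalH HS HB).

Lemma ergotropy_local_conj X :
  ergotropy H ((S *m X *m dagger S) *t T) = ergotropy H (X *t T).
Proof.
have S1_unitary : qunitary (S *t (1%:M : 'M[R[i]]_m)).
  by rewrite /qunitary dagger_tens tensmx_mul dagger1 mul1mx S_unitary tensmx11.
have S1_H : dagger (S *t 1%:M) *m H *m (S *t 1%:M) = H.
  rewrite /totalH dagger_tens dagger1 mulmxDr mulmxDl !tensmx_mul.
  by rewrite !mulmx1 !mul1mx S_HS S_unitary.
rewrite -(ergotropy_conj (X *t T) S1_unitary S1_H).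
by rewrite dagger_tens dagger1 !tensmx_mul mulmx1 mul1mx.
Qed.

Lemma ergotropy_pinch X :
  ergotropy H (((2^-1)%:C%C *: (X + S *m X *m dagger S)) *t T) <= ergotropy H (X *t T).
Proof.
rewrite tensmxZl tensmxDl; apply: le_trans (ergotropy_mid _ _ _) _.
rewrite ergotropy_local_conj; lra.
Qed.

End LocalUnitary.

Section Eigenbasis.
Variables (R : realType) (n : nat) (U : 'M[R[i]]_n).
Hypothesis U_unitary : qunitary U.
Local Notation C := R[i].

Definition diag_eig (s : 'I_n -> C) : 'M[C]_n := U *m diag_mx (\row_a s a) *m dagger U.

Definition schur_eig (rho : 'M[C]_n) (c : 'I_n -> 'I_n -> C) : 'M[C]_n :=
  U *m (\matrix_(a, b) ((dagger U *m rho *m U) a b * c a b)) *m dagger U.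

Lemma dagger_diag_eig s : dagger (diag_eig s) = diag_eig (fun a => (s a)^*%C).
Proof. by rewrite /diag_eig !daggerM daggerK dagger_diag mulmxA. Qed.

Lemma diag_eigM s t : diag_eig s *m diag_eig t = diag_eig (fun a => s a * t a).
Proof.
rewrite /diag_eig -!mulmxA (mulmxA (dagger U) U) U_unitary mul1mx.
rewrite [diag_mx _ *m (diag_mx _ *m _)]mulmxA mulmx_diag.
by congr (_ *m (diag_mx _ *m _)); apply/matrixP => i j; rewrite !mxE.
Qed.

Lemma diag_eig_unitary s : (forall a, (s a)^*%C * s a = 1) -> qunitary (diag_eig s).
Proof.
move=> s1; rewrite /qunitary dagger_diag_eig diag_eigM.
under [fun a => _]funext do rewrite s1.
rewrite /diag_eig (_ : diag_mx _ = 1%:M) ?mulmx1 ?qunitary_mulmxV //.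
by apply/matrixP => i j; rewrite !mxE.
Qed.

Lemma diag_eig_commute s t : (forall a, (s a)^*%C * s a = 1) ->
  dagger (diag_eig s) *m diag_eig t *m diag_eig s = diag_eig t.
Proof.
move=> s1; rewrite dagger_diag_eig !diag_eigM.
by under [fun a => _]funext do rewrite mulrAC s1 mul1r.
Qed.

Lemma schur_eig_entry rho c j k : schur_eig rho c j k =
  \sum_b \sum_a U j a * (dagger U *m rho *m U) a b * dagger U b k * c a b.
Proof.
rewrite /schur_eig mxE; apply: eq_bigr => b _; rewrite mxE mulr_suml.
by apply: eq_bigr => a _; rewrite mxE; ring.
Qed.

Lemma schur_eig1 rho : schur_eig rho (fun _ _ => 1) = rho.
Proof.
rewrite /schur_eig (_ : \matrix_(a, b) _ = dagger U *m rho *m U).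
  by rewrite !mulmxA qunitary_mulmxV // mul1mx -mulmxA qunitary_mulmxV // mulmx1.
by apply/matrixP => a b; rewrite !mxE mulr1.
Qed.

Lemma diag_eig_conj_schur rho s c :
  diag_eig s *m schur_eig rho c *m dagger (diag_eig s) =
  schur_eig rho (fun a b => s a * c a b * (s b)^*%C).
Proof.
rewrite dagger_diag_eig /diag_eig /schur_eig -!mulmxA (mulmxA (dagger U) U).
rewrite U_unitary mul1mx !mulmxA -(mulmxA _ (dagger U) U) U_unitary mulmx1.
rewrite -(mulmxA U (diag_mx _)) -(mulmxA U) mul_diag_mx mul_mx_diag.
by congr (_ *m _ *m _); apply/matrixP => a b; rewrite !mxE; ring.
Qed.

Lemma schur_eig_mid rho c1 c2 :
  (2^-1)%:C%C *: (schur_eig rho c1 + schur_eig rho c2) =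
  schur_eig rho (fun a b => (2^-1)%:C%C * (c1 a b + c2 a b)).
Proof.
apply/matrixP => j k; rewrite [LHS]mxE [X in _ * X = _]mxE !schur_eig_entry.
rewrite -big_split mulr_sumr; apply: eq_bigr => b _.
by rewrite -big_split mulr_sumr; apply: eq_bigr => a _ /=; ring.
Qed.

Lemma schur_eig_cvg rho (ck : nat -> 'I_n -> 'I_n -> C) c :
  (forall a b, ccvg (fun k => ck k a b) (c a b)) ->
  mx_cvg (fun k => schur_eig rho (ck k)) (schur_eig rho c).
Proof.
move=> ckc j k; change (ccvg (fun t => schur_eig rho (ck t) j k) (schur_eig rho c j k)).
rewrite schur_eig_entry; under [fun t => _]funext do rewrite schur_eig_entry.
by apply: ccvg_sum => b; apply: ccvg_sum => a; exact: ccvgZ.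
Qed.

End Eigenbasis.

Section Evolution.
Variables (R : realType) (n : nat) (U : 'M[R[i]]_n) (E : 'I_n -> R).
Hypothesis U_unitary : qunitary U.

Lemma rotH_schur t rho :
  rotH U E t rho = schur_eig U rho (fun a b => expiR ((E b - E a) * t)).
Proof.
rewrite /rotH -[in LHS](schur_eig1 U_unitary rho).
rewrite [evol U E t]/(diag_eig U _) diag_eig_conj_schur //; congr (schur_eig _ _ _).
apply/funext => a; apply/funext => b.
by rewrite mulr1 conj_expiR opprK expiRD; congr expiR; ring.
Qed.

Lemma dephase_schur rho :
  dephase U E rho = schur_eig U rho (fun a b => if E a == E b then 1 else 0).
Proof.
rewrite /dephase /schur_eig; congr (_ *m _ *m _).
by apply/matrixP => a b; rewrite !mxE; case: ifP; rewrite ?mulr1 ?mulr0.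
Qed.

Lemma ergotropy_rotH m (HB T : 'M[R[i]]_m) t rho :
  ergotropy (totalH (specH U E) HB) (rotH U E t rho *t T) =
  ergotropy (totalH (specH U E) HB) (rho *t T).
Proof.
have unimod a : (expiR (- (E a * t)))^*%C * expiR (- (E a * t)) = 1.
  exact: conj_expiR_mul.
apply: ergotropy_local_conj; first exact: diag_eig_unitary.
exact: diag_eig_commute.
Qed.

End Evolution.

Lemma cos_scale_continuous (R : realType) (w : R) : continuous (fun t => cos (w * t)).
Proof.
move=> x; apply: (@continuous_comp _ _ _ (fun t => w * t) cos).
  exact: mulrl_continuous.
exact: continuous_cos.
Qed.

Lemma sin_scale_continuous (R : realType) (w : R) : continuous (fun t => sin (w * t)).
Proof.
move=> x; apply: (@continuous_comp _ _ _ (fun t => w * t) sin).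
  exact: mulrl_continuous.
exact: continuous_sin.
Qed.

Section CharacteristicFunction.
Variables (R : realType) (Q : probability R R).
Local Notation C := R[i].
Local Notation integrable f := (Q.-integrable setT (EFin \o f)).

Definition charfun (w : R) : C :=
  ((\int[Q]_t cos (w * t)) +i* (\int[Q]_t sin (w * t)))%C.

Lemma integrable_scale c f : integrable f -> integrable (fun t => c * f t).
Proof.
move=> fi; rewrite (_ : EFin \o _ = fun t => c%:E * (EFin \o f) t)%E.
  exact: integrableZl.
by apply/funext => t; rewrite /= EFinM.
Qed.

Lemma integrable_add f g :
  integrable f -> integrable g -> integrable (fun t => f t + g t).
Proof.
move=> fi gi; rewrite (_ : EFin \o _ = (EFin \o f) \+ (EFin \o g))%E.
  exact: integrableD.
by apply/funext => t; rewrite /= EFinD.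
Qed.

Lemma integrable_bounded_continuous f :
  continuous f -> (forall x, `|f x| <= 1) -> integrable f.
Proof.
move=> cf bf; apply: (@le_integrable _ _ _ _ _ measurableT _ (EFin \o cst 1)).
- by apply/measurable_EFinP; exact: continuous_measurable_fun.
- by move=> x _ /=; rewrite lee_fin normr1 bf.
- exact: finite_measure_integrable_cst.
Qed.

Lemma integrable_cos w : integrable (fun t => cos (w * t)).
Proof.
by apply: integrable_bounded_continuous => [|x];
  [exact: cos_scale_continuous | exact: cos_max].
Qed.

Lemma integrable_sin w : integrable (fun t => sin (w * t)).
Proof.
by apply: integrable_bounded_continuous => [|x];
  [exact: sin_scale_continuous | exact: sin_max].
Qed.

Lemma integrable_trig p q w : integrable (fun t => p * cos (w * t) + q * sin (w * t)).
Proof.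
apply: integrable_add; apply: integrable_scale.
  exact: integrable_cos.
exact: integrable_sin.
Qed.

Lemma Rintegral_trig p q w :
  \int[Q]_t (p * cos (w * t) + q * sin (w * t)) =
  p * \int[Q]_t cos (w * t) + q * \int[Q]_t sin (w * t).
Proof.
rewrite RintegralD //; last 2 first.
- exact/integrable_scale/integrable_cos.
- exact/integrable_scale/integrable_sin.
by rewrite !RintegralZl //; [exact: integrable_sin | exact: integrable_cos].
Qed.

Lemma Rintegral_sum (I : Type) (r : seq I) (f : I -> R -> R) :
  (forall i, integrable (f i)) ->
  \int[Q]_t (\sum_(i <- r) f i t) = \sum_(i <- r) \int[Q]_t f i t.
Proof.
move=> fi; rewrite /Rintegral.
under eq_integral do rewrite -sumEFin.
rewrite integral_sum // -EFin_sum_fine // => i _.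
by apply: integrable_fin_num => //; exact: fi.
Qed.

Lemma integral_expiR_sum (I : finType) (a : I -> C) (w : I -> R) :
  ((\int[Q]_t Re (\sum_i a i * expiR (w i * t))) +i*
   (\int[Q]_t Im (\sum_i a i * expiR (w i * t))))%C =
  \sum_i a i * charfun (w i).
Proof.
apply/eqP; rewrite eq_complex /= Re_sum Im_sum; apply/andP; split; apply/eqP.
- under eq_Rintegral do rewrite Re_sum.
  under eq_Rintegral do under eq_bigr do rewrite Re_mul_expiR.
  rewrite Rintegral_sum => [|i]; last exact: integrable_trig.
  by apply: eq_bigr => i _; rewrite Rintegral_trig Re_mul mulNr.
- under eq_Rintegral do rewrite Im_sum.
  under eq_Rintegral do under eq_bigr do rewrite Im_mul_expiR.
  rewrite Rintegral_sum => [|i]; last exact: integrable_trig.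
  by apply: eq_bigr => i _; rewrite Rintegral_trig Im_mul addrC.
Qed.

Lemma charfun0 : charfun 0 = 1.
Proof.
rewrite /charfun; under eq_Rintegral do rewrite mul0r cos0.
under [X in (_ +i* X)%C]eq_Rintegral do rewrite mul0r sin0.
have Q1 : fine (Q [set: R]) = 1.
  by rewrite -[1]/(fine 1%E); congr fine; exact: probability_setT.
by rewrite !Rintegral_cst // Q1 mul0r mul1r.
Qed.

End CharacteristicFunction.

Lemma sigmaS_schur (R : realType) n (U : 'M[R[i]]_n) E rho (Q : probability R R) :
  qunitary U -> sigmaS U E rho Q = schur_eig U rho (fun a b => charfun Q (E b - E a)).
Proof.
move=> U_unitary; apply/matrixP => j k; rewrite mxE.
under eq_Rintegral do rewrite rotH_schur // schur_eig_entry pair_bigA /=.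
under [X in (_ +i* X)%C]eq_Rintegral do
  rewrite rotH_schur // schur_eig_entry pair_bigA /=.
rewrite (integral_expiR_sum Q
  (fun p : 'I_n * 'I_n => U j p.2 * (dagger U *m rho *m U) p.2 p.1 * dagger U p.1 k)
  (fun p => E p.1 - E p.2)).
by rewrite schur_eig_entry pair_bigA.
Qed.

Section WeightLimits.
Variables (R : realType) (n : nat) (U : 'M[R[i]]_n) (E : 'I_n -> R) (rho : 'M[R[i]]_n).
Hypothesis U_unitary : qunitary U.
Variable P : nat -> probability R R.

Lemma sigmaS_cvg_time_state t0 : tends_to_time_state P t0 ->
  mx_cvg (fun k => sigmaS U E rho (P k)) (rotH U E t0 rho).
Proof.
move=> Pt0; rewrite rotH_schur //; under [fun k => _]funext do rewrite sigmaS_schur //.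
apply: schur_eig_cvg => a b; split.
- by apply: Pt0; [exact: cos_scale_continuous | exists 1 => x; exact: cos_max].
- by apply: Pt0; [exact: sin_scale_continuous | exists 1 => x; exact: sin_max].
Qed.

Lemma sigmaS_cvg_energy_state : tends_to_energy_state P ->
  mx_cvg (fun k => sigmaS U E rho (P k)) (dephase U E rho).
Proof.
move=> Peps; rewrite dephase_schur //.
under [fun k => _]funext do rewrite sigmaS_schur //.
apply: schur_eig_cvg => a b; have [<-|Eab] := eqVneq (E a) (E b).
- under [fun k => _]funext do rewrite subrr charfun0.
  exact: ccvg_cst.
- by apply: Peps; rewrite subr_eq0 eq_sym.
Qed.

End WeightLimits.

Lemma mx_cvg_tensl (R : realType) p q r s (Xk : nat -> 'M[R[i]]_(p, q)) X
  (T : 'M[R[i]]_(r, s)) :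
  mx_cvg Xk X -> mx_cvg (fun k => Xk k *t T) (X *t T).
Proof.
move=> XkX i j; change (ccvg (fun k => (Xk k *t T) i j) ((X *t T) i j)).
rewrite mxE mulrC; under [fun k => _]funext do rewrite mxE mulrC.
exact: ccvgZ.
Qed.

Lemma lockedE_cvg (R : realType) n m (HS U : 'M[R[i]]_n) E (HB tau : 'M[R[i]]_m)
  rho (P : nat -> probability R R) X :
  mx_cvg (fun k => sigmaS U E rho (P k)) X ->
  lockedE HS U E HB tau rho (P k) @[k --> \oo] -->
  ergotropy (totalH HS HB) (rho *t tau) - ergotropy (totalH HS HB) (X *t tau).
Proof.
move=> sigma_cvg; rewrite /lockedE; apply: cvgB; first exact: cvg_cst.
exact/ergotropy_cvg/mx_cvg_tensl.
Qed.

Section Dephasing.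
Variables (R : realType) (n m : nat) (U : 'M[R[i]]_n) (E : 'I_n -> R).
Variables (HB T : 'M[R[i]]_m).
Hypothesis U_unitary : qunitary U.
Local Notation C := R[i].
Local Notation H := (totalH (specH U E) HB).

(* [diag_eig U (block_sign l)] is the reflection [1 - 2 P] in the eigenspace of
   [specH U E] for the eigenvalue [E l]. *)
Definition block_sign (l a : 'I_n) : C := if E a == E l then -1 else 1.

Definition block_mask (r : seq 'I_n) (c : 'I_n -> 'I_n -> C) (a b : 'I_n) : C :=
  if all (fun l => (E a == E l) == (E b == E l)) r then c a b else 0.

Lemma block_sign_unimod l a : (block_sign l a)^*%C * block_sign l a = 1.
Proof.
by rewrite /block_sign; case: ifP => _; rewrite ?rmorphN1 ?mulN1r ?opprK ?conjc1 ?mul1r.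
Qed.

Lemma schur_block_mask_cons rho l r c :
  schur_eig U rho (block_mask (l :: r) c) =
  (2^-1)%:C%C *: (schur_eig U rho (block_mask r c) +
    diag_eig U (block_sign l) *m schur_eig U rho (block_mask r c) *m
    dagger (diag_eig U (block_sign l))).
Proof.
rewrite diag_eig_conj_schur // schur_eig_mid; congr (schur_eig _ _ _).
apply/funext => a; apply/funext => b; rewrite /block_mask /block_sign /=.
have half (z : C) : z = (2^-1)%:C%C * (z + z).
  by apply/eqP; rewrite eq_complex; case: z => x y /=; apply/andP; split; apply/eqP; lra.
case: (all _ r); rewrite ?andbF ?andbT /=; last by rewrite !mulr0 !mul0r addr0 mulr0.
rewrite (fun_if (@conjc R)) rmorphN1 conjc1.
case: (E a == E l); case: (E b == E l) => /=;
  rewrite ?mulN1r ?mulrN1 ?opprK ?mul1r ?mulr1 ?addrN ?mulr0 //; exact: half.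
Qed.

Lemma ergotropy_block_mask rho r c :
  ergotropy H (schur_eig U rho (block_mask r c) *t T) <=
  ergotropy H (schur_eig U rho c *t T).
Proof.
elim: r => [|l r IH]; first by rewrite (_ : block_mask [::] c = c).
apply: le_trans IH; rewrite schur_block_mask_cons; apply: ergotropy_pinch.
- exact/diag_eig_unitary/block_sign_unimod.
- exact/diag_eig_commute/block_sign_unimod.
Qed.

Lemma block_mask_enum c :
  block_mask (enum 'I_n) c = fun a b => if E a == E b then c a b else 0.
Proof.
apply/funext => a; apply/funext => b; rewrite /block_mask.
congr (if _ then _ else _); apply/allP/eqP => [Eab|-> l _]; last by rewrite eqxx.
by move: (Eab a); rewrite mem_enum eqxx eq_sym eqb_id => /(_ isT) /eqP.
Qed.

Lemma ergotropy_dephase_le rho Q :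
  ergotropy H (dephase U E rho *t T) <= ergotropy H (sigmaS U E rho Q *t T).
Proof.
have -> : dephase U E rho =
    schur_eig U rho (block_mask (enum 'I_n) (fun a b => charfun Q (E b - E a))).
  rewrite dephase_schur // block_mask_enum; congr (schur_eig _ _ _).
  apply/funext => a; apply/funext => b.
  by case: eqP => [->|_]; first rewrite subrr charfun0.
rewrite sigmaS_schur; last exact: U_unitary.
exact: ergotropy_block_mask.
Qed.

End Dephasing.

Unset Implicit Arguments.
Set Strict Implicit.

Theorem mainTheorem4 (R : realType) (n m : nat)
  (HS : 'M[R[i]]_n) (U : 'M[R[i]]_n) (E : 'I_n -> R)
  (HB : 'M[R[i]]_m) (V : 'M[R[i]]_m) (F : 'I_m -> R) (beta : R)
  (rhoS : 'M[R[i]]_n) :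
  qunitary U -> HS = specH U E ->
  qunitary V -> HB = specH V F -> 0 < beta ->
  density rhoS ->
  let tau := gibbs V F beta in
  let H := totalH HS HB in
  (* weight tends to a time state |t0><t0| *)
  (forall (P : nat -> probability R R) (t0 : R),
     tends_to_time_state P t0 ->
     mx_cvg (fun k => sigmaS U E rhoS (P k)) (rotH U E t0 rhoS) /\
     (lockedE HS U E HB tau rhoS (P k) @[k --> \oo] --> 0)) /\
  (* weight tends to an energy eigenstate |eps><eps| *)
  (forall P : nat -> probability R R,
     tends_to_energy_state P ->
     mx_cvg (fun k => sigmaS U E rhoS (P k)) (dephase U E rhoS) /\
     (lockedE HS U E HB tau rhoS (P k) @[k --> \oo] -->
        ergotropy H (rhoS *t tau) - ergotropy H (dephase U E rhoS *t tau)) /\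
     (* ... and this limiting value is the maximal locked energy *)
     (forall Q : probability R R,
        lockedE HS U E HB tau rhoS Q <=
        ergotropy H (rhoS *t tau) - ergotropy H (dephase U E rhoS *t tau))).
Proof.
move=> U_unitary -> _ _ _ _ tau H; split.
- move=> P t0 Pt0.
  have sigma_cvg := sigmaS_cvg_time_state E rhoS U_unitary Pt0.
  split; first exact: sigma_cvg.
  have := lockedE_cvg (HS := specH U E) (HB := HB) (tau := tau) sigma_cvg.
  by rewrite (ergotropy_rotH E U_unitary) subrr; apply.
- move=> P Peps.
  have sigma_cvg := sigmaS_cvg_energy_state E rhoS U_unitary Peps.
  split; first exact: sigma_cvg.
  split; first exact: lockedE_cvg.
  move=> Q; rewrite /lockedE lerD2l lerN2.
  exact: ergotropy_dephase_le.
Qed.
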